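(* Let $\Delta$ be a positive integer and suppose there exists a constant $0<c_{\Delta}<1$ such that $\mathrm{es}_{\Delta}(H)\leq c_{\Delta}|V(H)|$ holds for every $\Delta$-regular finite simple graph $H$. Then $\mathrm{es}_{\Delta}(G)\leq c_{\Delta}|V(G)|$ holds for every finite simple graph $G$ with $\Delta(G)=\Delta$.
   Context: For a graph $G$ with at least one edge, $\mathrm{es}_{\Delta}(G)$ denotes the $\Delta$-edge stability number: the minimum number of edges of $G$ whose removal results in a subgraph with maximum degree $\Delta(G)-1$. *)

(* A finite simple graph is a symmetric irreflexive
   relation e : rel T on a finite type T (vertex set = T). *)
From mathcomp Require Import all_boot all_order all_algebra.
Set Implicit Arguments. Unset Strict Implicit. Unset Printing Implicit Defensive.

Section Graphs.
Variable T : finType.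

Definition deg (e : rel T) (x : T) : nat := #|[set y | e x y]|.

(* maximum degree Delta(G) (0 for the empty vertex set) *)
Definition maxdeg (e : rel T) : nat := \max_(x : T) deg e x.

Definition edges (e : rel T) : {set {set T}} :=
  [set [set x; y] | x in T, y in T & e x y].

Definition rm_edges (e : rel T) (F : {set {set T}}) : rel T :=
  [rel x y | e x y && ([set x; y] \notin F)].

(* es_Delta(G): the minimum number of edges of G whose removal yields a
   subgraph with maximum degree Delta(G) - 1.  (The min is over a nonempty
   family whenever G has an edge; the default #|edges e| is never used then.) *)
Definition es_Delta (e : rel T) : nat :=
  \big[minn/#|edges e|]_(F : {set {set T}} |
        (F \subset edges e) && (maxdeg (rm_edges e F) == (maxdeg e).-1)) #|F|.
End Graphs.

(* Given G with maximum degree D, take 2D disjoint copies of G, split into two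
   halves of D copies, and for every vertex v join its D copies in one half to
   its D copies in the other half by a bipartite circulant graph of degree
   D - deg v.  The result H is D-regular with 2D|V(G)| vertices.  If deleting F
   lowers the maximum degree of H, then on every copy the edges of F that lie
   in that copy lower the maximum degree of G; these traces are disjoint, so
   one of them has at most |F|/(2D) edges.  Hence
   2D es(G) <= es(H) <= c |V(H)| = 2D c |V(G)|. *)

From mathcomp Require Import all_boot all_order all_algebra.
Set Implicit Arguments. Unset Strict Implicit. Unset Printing Implicit Defensive.
Import Order.TTheory GRing.Theory Num.Theory.

Section EdgeStability.
Variable T : finType.
Implicit Types (e : rel T) (F : {set {set T}}).

Lemma deg_le_maxdeg e x : deg e x <= maxdeg e.
Proof. exact: leq_bigmax. Qed.

Lemma maxdeg_leP e m : reflect (forall x, deg e x <= m) (maxdeg e <= m).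
Proof. by apply: (iffP (bigmax_leqP _ _ _)) => le_m x => [|_]; apply: le_m. Qed.

Lemma maxdeg_regular e D (x0 : T) : (forall x, deg e x = D) -> maxdeg e = D.
Proof.
move=> reg; apply/eqP; rewrite eqn_leq -{2}(reg x0) deg_le_maxdeg andbT.
by apply/maxdeg_leP => x; rewrite reg.
Qed.

Lemma rm_edgesE e F x y : rm_edges e F x y = e x y && ([set x; y] \notin F).
Proof. by []. Qed.

Lemma edge_in_edges e x y : e x y -> [set x; y] \in edges e.
Proof. by move=> exy; apply/imset2P; exists x y; rewrite ?inE. Qed.

Lemma maxdeg_rm_edges0 e : maxdeg (rm_edges e set0) = maxdeg e.
Proof.
by apply: eq_bigr => x _; apply: eq_card => y; rewrite !inE rm_edgesE inE andbT.
Qed.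

Lemma maxdeg_rm_edges_edges e : maxdeg (rm_edges e (edges e)) = 0.
Proof.
apply/eqP; rewrite -leqn0; apply/maxdeg_leP => x; rewrite leqn0 cards_eq0.
apply/eqP/setP => y; rewrite !inE rm_edgesE.
by case: (boolP (e x y)) => //= /edge_in_edges ->.
Qed.

Lemma deg_rm_edges_setD1 e F s x :
  deg (rm_edges e (F :\ s)) x <= (deg (rm_edges e F) x).+1.
Proof.
have sub_nbhd : [set y | rm_edges e (F :\ s) x y]
    \subset [set y | rm_edges e F x y] :|: [set y | [set x; y] == s].
  apply/subsetP => y; rewrite !inE !rm_edgesE !inE negb_and negbK.
  by case/andP=> -> /orP[/eqP ->|->]; rewrite ?eqxx ?orbT.
have le1 : #|[set y | [set x; y] == s]| <= 1.
  apply/card_le1_eqP => y z; rewrite !inE => /eqP xy_s /eqP xz_s.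
  have : z \in [set x; y] by rewrite xy_s -xz_s !inE eqxx orbT.
  rewrite !inE => /orP[/eqP zx|/eqP //].
  have : y \in [set x; z] by rewrite xz_s -xy_s !inE eqxx orbT.
  by rewrite zx !inE orbb => /eqP.
rewrite /deg -addn1; apply: leq_trans (subset_leq_card sub_nbhd) _.
by apply: leq_trans (leq_card_setU _ _) _; rewrite leq_add2l.
Qed.

Lemma maxdeg_rm_edges_setD1 e F s :
  maxdeg (rm_edges e (F :\ s)) <= (maxdeg (rm_edges e F)).+1.
Proof.
apply/maxdeg_leP => x; apply: leq_trans (deg_rm_edges_setD1 e F s x) _.
by rewrite ltnS deg_le_maxdeg.
Qed.

Lemma exists_sub_rm_edges_maxdeg_pred e F : 0 < maxdeg e ->
    maxdeg (rm_edges e F) <= (maxdeg e).-1 ->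
  exists2 F' : {set {set T}}, F' \subset F & maxdeg (rm_edges e F') = (maxdeg e).-1.
Proof.
move=> maxdeg_gt0 le_F.
(* A minimal such subset works: putting one edge back raises degrees by at most one. *)
pose lowers F := maxdeg (rm_edges e F) <= (maxdeg e).-1.
have [F' /minsetP[le_F' min_F'] sub_F'] := @minset_exists _ lowers F le_F.
exists F' => //; apply/anti_leq/andP; split; first exact: le_F'.
rewrite leqNgt; apply/negP => lt_F'.
have /set0Pn[s s_F'] : F' != set0.
  by apply: contraTneq lt_F' => ->; rewrite maxdeg_rm_edges0 -leqNgt leq_pred.
have le_F's : lowers (F' :\ s) by apply: leq_trans (maxdeg_rm_edges_setD1 _ _ _) _.
by have /setP/(_ s) := min_F' _ le_F's (subsetDl _ _); rewrite !inE eqxx s_F'.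
Qed.

Lemma es_Delta_le e F : 0 < maxdeg e -> F \subset edges e ->
  maxdeg (rm_edges e F) <= (maxdeg e).-1 -> es_Delta e <= #|F|.
Proof.
move=> maxdeg_gt0 sub_F le_F.
have [F' sub_F' eq_F'] := exists_sub_rm_edges_maxdeg_pred maxdeg_gt0 le_F.
apply: leq_trans (subset_leq_card sub_F'); rewrite /es_Delta -minEnat -leEnat.
by apply: bigmin_le_cond; rewrite (subset_trans sub_F') // eq_F' eqxx.
Qed.

Lemma es_Delta_attained e : 0 < maxdeg e ->
  exists2 F : {set {set T}}, maxdeg (rm_edges e F) = (maxdeg e).-1 & #|F| = es_Delta e.
Proof.
move=> maxdeg_gt0.
have [F0 sub_F0 eq_F0] : exists2 F0 : {set {set T}}, F0 \subset edges e &
    maxdeg (rm_edges e F0) = (maxdeg e).-1.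
  by apply: exists_sub_rm_edges_maxdeg_pred; rewrite ?maxdeg_rm_edges_edges.
pose valid F := (F \subset edges e) && (maxdeg (rm_edges e F) == (maxdeg e).-1).
have valid_F0 : valid F0 by rewrite /valid sub_F0 eq_F0 eqxx.
have le_edges F : valid F -> #|F| <= #|edges e|.
  by case/andP=> sub_F _; apply: subset_leq_card.
rewrite /es_Delta -minEnat.
have [F /andP[_ /eqP eq_F] ->] := eq_bigmin F0 valid (fun F => #|F|) valid_F0 le_edges.
by exists F.
Qed.

End EdgeStability.

Lemma exists_mul_card_le_sum (I : finType) (i0 : I) (a : I -> nat) :
  exists i, a i * #|I| <= \sum_j a j.
Proof.
have [i _ min_i] := arg_minnP a (isT : predT i0).
exists i; rewrite mulnC -sum_nat_const.
by apply: leq_sum => j _; apply: min_i.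
Qed.

Section Copies.
Variables (T P : finType) (e : rel T) (h : rel (T * P)).
Hypothesis copy_edge : forall p u w, e u w -> h (u, p) (w, p).

Definition copy_trace (F : {set {set T * P}}) (p : P) : {set {set T}} :=
  [set s in edges e | (pair^~ p) @: s \in F].

Lemma pair_inj (p : P) : injective (pair^~ p : T -> T * P).
Proof. by move=> u w []. Qed.

Lemma copy_trace_sub F p : copy_trace F p \subset edges e.
Proof. by apply/subsetP => s; rewrite inE => /andP[]. Qed.

Lemma maxdeg_rm_copy_trace F p :
  maxdeg (rm_edges e (copy_trace F p)) <= maxdeg (rm_edges h F).
Proof.
apply/maxdeg_leP => u; apply: leq_trans (deg_le_maxdeg _ (u, p)).
rewrite /deg -(card_imset _ (@pair_inj p)).
apply/subset_leq_card/subsetP => _ /imsetP[w + ->]; rewrite !inE !rm_edgesE.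
case/andP=> euw uw_F; rewrite copy_edge //=.
by move: uw_F; rewrite inE edge_in_edges //= imsetU1 imset_set1.
Qed.

Lemma sum_card_copy_trace F : \sum_p #|copy_trace F p| <= #|F|.
Proof.
pose S := [set ps : P * {set T} | ps.2 \in copy_trace F ps.1].
pose lift (ps : P * {set T}) := (pair^~ ps.1) @: ps.2.
have card_S : #|S| = \sum_p #|copy_trace F p|.
  rewrite -sum1_card (eq_bigr (fun p => \sum_(s in copy_trace F p) 1)).
    by rewrite pair_big_dep; apply: eq_bigl => -[p s]; rewrite inE.
  by move=> p _; rewrite sum1_card.
have lift_inj : {in S &, injective lift}.
  move=> [p s] [q t]; rewrite !inE /= => /andP[/imset2P[a b _ _ ->] _] _ eq_lift.
  have /imsetP[_ _ [_ eq_pq]] : (a, p) \in lift (q, t).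
    by rewrite -eq_lift; apply/imsetP; exists a; rewrite ?inE ?eqxx.
  by move: eq_lift; rewrite eq_pq => /(imset_inj (@pair_inj q)) /= ->.
rewrite -card_S -(card_in_imset lift_inj); apply/subset_leq_card/subsetP.
by move=> _ /imsetP[[p s] + ->]; rewrite !inE => /andP[].
Qed.

Lemma es_Delta_mul_card_le : 0 < maxdeg e -> maxdeg h = maxdeg e ->
  es_Delta e * #|P| <= es_Delta h.
Proof.
move=> maxdeg_gt0 eq_maxdeg.
have [->|/card_gt0P[p0 _]] := posnP #|P|; first by rewrite muln0.
have [F rm_F <-] : exists2 F, maxdeg (rm_edges h F) = (maxdeg h).-1 & #|F| = es_Delta h.
  by apply: es_Delta_attained; rewrite eq_maxdeg.
have [p le_avg] := exists_mul_card_le_sum p0 (fun p => #|copy_trace F p|).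
apply: leq_trans (leq_trans le_avg (sum_card_copy_trace F)).
rewrite leq_mul2r es_Delta_le ?orbT ?copy_trace_sub //.
by rewrite -eq_maxdeg -rm_F maxdeg_rm_copy_trace.
Qed.

End Copies.

Lemma card_ord_lt (D k : nat) : k <= D -> #|[set r : 'I_D | r < k]| = k.
Proof.
move=> le_kD; have widen_inj : injective (widen_ord le_kD).
  by move=> j1 j2 /(congr1 val) /= /val_inj.
rewrite -[RHS]card_ord -(card_imset _ widen_inj).
apply: eq_card => r; rewrite inE; apply/idP/imsetP => [r_lt_k|[j _ ->]].
  by exists (Ordinal r_lt_k) => //; apply: val_inj.
exact: (ltn_ord j).
Qed.

Lemma card_ord_addn_mod_lt (D k : nat) (i : 'I_D) : k <= D ->
  #|[set j : 'I_D | (i + j) %% D < k]| = k.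
Proof.
move=> le_kD; have D_gt0 : 0 < D by apply: leq_ltn_trans (ltn_ord i).
pose shift (j : 'I_D) : 'I_D := Ordinal (ltn_pmod (i + j) D_gt0).
have shift_inj : injective shift.
  move=> j1 j2 /(congr1 val) /eqP /=; rewrite eqn_modDl !modn_small // => /eqP.
  exact: val_inj.
rewrite -[RHS](card_ord_lt le_kD) -[RHS](card_preimset _ shift_inj).
by apply: eq_card => j; rewrite !inE.
Qed.

Section Regularization.
Variables (T : finType) (e : rel T) (D : nat).

(* The copies of v are the (v, (b, i)); besides the edges inside each copy
   (b, i) of e, the copies of v with b = true are joined to those with
   b = false by a circulant bipartite graph of degree D - deg e v. *)
Definition regularize : rel (T * (bool * 'I_D)) :=
  fun x y => ((x.2 == y.2) && e x.1 y.1) ||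
    [&& x.1 == y.1, x.2.1 != y.2.1 & (x.2.2 + y.2.2) %% D < D - deg e x.1].

Lemma regularize_sym : symmetric e -> symmetric regularize.
Proof.
move=> e_sym [u [b i]] [v [c j]]; rewrite /regularize /= e_sym [(b, i) == _]eq_sym.
by rewrite [v == u]eq_sym [c == b]eq_sym addnC; case: (u =P v) => // ->.
Qed.

Lemma regularize_irr : irreflexive e -> irreflexive regularize.
Proof. by move=> e_irr [u [b i]]; rewrite /regularize /= e_irr !eqxx. Qed.

Lemma regularize_copy p u w : e u w -> regularize (u, p) (w, p).
Proof. by rewrite /regularize /= eqxx => ->. Qed.

Lemma deg_regularize : (forall v, deg e v <= D) -> forall x, deg regularize x = D.
Proof.
move=> deg_le [v [b i]]; rewrite /deg.
pose A := setX [set u | e v u] [set (b, i)].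
pose B := setX [set v] (setX [set ~~ b] [set j : 'I_D | (i + j) %% D < D - deg e v]).
have -> : [set y | regularize (v, (b, i)) y] = A :|: B.
  apply/setP => -[u [c j]]; rewrite !inE /regularize /=.
  by rewrite andbC [(c, j) == _]eq_sym [u == v]eq_sym; case: (b); case: (c).
have disj_AB : A :&: B = set0.
  apply/setP => -[u [c j]]; rewrite !inE /= xpair_eqE.
  by case: (b); case: (c); rewrite ?andbF.
rewrite cardsU disj_AB cards0 subn0 !cardsX !cards1 card_ord_addn_mod_lt ?leq_subr //.
by rewrite muln1 !mul1n (subnKC (deg_le v)).
Qed.
End Regularization.
Arguments regularize {T} e D.

Local Open Scope ring_scope.

Theorem theorem3p2 (R : realFieldType) (D : nat) (c : R) :
  (0 < D)%N -> 0 < c -> c < 1 ->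
  (forall (T : finType) (e : rel T), symmetric e -> irreflexive e ->
     (forall x : T, deg e x = D) ->
     (es_Delta e)%:R <= c * #|T|%:R) ->
  forall (T : finType) (e : rel T), symmetric e -> irreflexive e ->
    maxdeg e = D ->
    (es_Delta e)%:R <= c * #|T|%:R.
Proof.
move=> D_gt0 _ _ es_regular T e e_sym e_irr maxdeg_e.
have deg_le v : (deg e v <= D)%N by rewrite -maxdeg_e deg_le_maxdeg.
have [v0 _] : exists v0 : T, true.
  case: (pickP (@predT T)) => [v0 _|T0]; first by exists v0.
  by move: D_gt0; rewrite -maxdeg_e /maxdeg big_pred0.
have regular_H := deg_regularize deg_le.
have maxdeg_H := maxdeg_regular (v0, (true, Ordinal D_gt0)) regular_H.
have le_es : (es_Delta e * #|{: bool * 'I_D}| <= es_Delta (regularize e D))%N.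
  by apply: es_Delta_mul_card_le; rewrite ?maxdeg_e //; apply: regularize_copy.
have le_es_H := es_regular _ _ (regularize_sym e_sym) (regularize_irr e_irr) regular_H.
have copies_gt0 : 0 < #|{: bool * 'I_D}|%:R :> R.
  by rewrite ltr0n card_prod card_bool card_ord muln_gt0.
rewrite -(ler_pM2r copies_gt0) -natrM -mulrA -natrM -card_prod.
by apply: le_trans le_es_H; rewrite ler_nat.
Qed.
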